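(* For all finite sets of formulas $\Gamma,\Delta$: if the sequent $\Gamma\Rightarrow\Delta$ is provable in $\mathsf{CLp}$, then $\Gamma\Vdash\Delta$.
   Context: Fix a countably infinite set $\mathsf{At}$ of atoms. Formulas are built from atoms and the constant $\bot$ using the binary connectives $\land,\lor,\to$. All contexts are finite sets (not multisets) of formulas; a comma denotes union; a subscript $\mathsf{At}$ indicates a finite set of atoms. An atomic sequent has the form $\Gamma_{\mathsf{At}} \Rightarrow \Delta_{\mathsf{At}}$. An atomic rule has finitely many (possibly zero) atomic sequents as premises and one atomic sequent as conclusion; a rule with zero premises is an atomic axiom. A base is a (possibly empty) set of atomic rules; $\mathcal{C}\supseteq\mathcal{B}$ ($\mathcal{C}$ extends $\mathcal{B}$) if $\mathcal{C}$ contains every rule of $\mathcal{B}$. Derivability $\vdash_{\mathcal{B}}$ of atomic sequents is the least relation such that: (Axiom/Weakening) if an atomic axiom with conclusion $\Gamma_{\mathsf{At}}\Rightarrow\Delta_{\mathsf{At}}$ is in $\mathcal{B}$, then $\vdash_{\mathcal{B}} \Theta_{\mathsf{At}},\Gamma_{\mathsf{At}}\Rightarrow\Delta_{\mathsf{At}},\Sigma_{\mathsf{At}}$ for all sets of atoms $\Theta_{\mathsf{At}},\Sigma_{\mathsf{At}}$; (Mix) if a rule with premises $\Gamma^i_{\mathsf{At}}\Rightarrow\Delta^i_{\mathsf{At}}$ ($1\le i\le n$) and conclusion $\Gamma_{\mathsf{At}}\Rightarrow\Delta_{\mathsf{At}}$ is in $\mathcal{B}$ and $\vdash_{\mathcal{B}}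 \Theta^i_{\mathsf{At}},\Gamma^i_{\mathsf{At}}\Rightarrow\Delta^i_{\mathsf{At}},\Sigma^i_{\mathsf{At}}$ for each $i$, then $\vdash_{\mathcal{B}} \Theta^1_{\mathsf{At}},\dots,\Theta^n_{\mathsf{At}},\Gamma_{\mathsf{At}}\Rightarrow\Delta_{\mathsf{At}},\Sigma^1_{\mathsf{At}},\dots,\Sigma^n_{\mathsf{At}}$. Support $\Vdash_{\mathcal{B}}$: (At) $\Vdash_{\mathcal{B}}\Gamma_{\mathsf{At}}$ iff $\vdash_{\mathcal{B}}\ \Rightarrow\Gamma_{\mathsf{At}}$; ($\land$) $\Vdash_{\mathcal{B}} A\land B,\Gamma$ iff $\Vdash_{\mathcal{B}}A,\Gamma$ and $\Vdash_{\mathcal{B}}B,\Gamma$; ($\lor$) $\Vdash_{\mathcal{B}}A\lor B,\Gamma$ iff $\Vdash_{\mathcal{B}}A,B,\Gamma$; ($\to$) $\Vdash_{\mathcal{B}}A\to B,\Gamma$ iff $A\Vdash_{\mathcal{B}}B,\Gamma$; ($\bot$) $\Vdash_{\mathcal{B}}\bot,\Gamma$ iff $\Vdash_{\mathcal{B}}\Gamma$; (Inf) for $n\ge1$, $\{A^1,\dots,A^n\}\Vdash_{\mathcal{B}}\Delta$ iff for every $\mathcal{C}\supseteq\mathcal{B}$ and all sets of atoms $\Theta^1_{\mathsf{At}},\dots,\Theta^n_{\mathsf{At}}$, if $\Vdash_{\mathcal{C}}\Theta^i_{\mathsf{At}},A^i$ for all $i$ then $\Vdash_{\mathcal{C}}\Theta^1_{\mathsf{At}},\dots,\Theta^n_{\mathsf{At}},\Delta$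 (and $\varnothing\Vdash_{\mathcal{B}}\Delta$ means $\Vdash_{\mathcal{B}}\Delta$). The atomic identity rule $\mathsf{Ainit}$ is the atomic axiom $\Gamma_{\mathsf{At}},p\Rightarrow p,\Delta_{\mathsf{At}}$; the atomic cut rule $\mathsf{Acut}$ has premises $\Gamma^1_{\mathsf{At}}\Rightarrow\Delta^1_{\mathsf{At}},p$ and $p,\Gamma^2_{\mathsf{At}}\Rightarrow\Delta^2_{\mathsf{At}}$ and conclusion $\Gamma^1_{\mathsf{At}},\Gamma^2_{\mathsf{At}}\Rightarrow\Delta^1_{\mathsf{At}},\Delta^2_{\mathsf{At}}$. $\mathcal{ST}$ is the base consisting of all instances of $\mathsf{Ainit}$ and $\mathsf{Acut}$ (all atoms $p$, all sets of atoms). Validity: $\Gamma\Vdash\Delta$ iff $\Gamma\Vdash_{\mathcal{B}}\Delta$ for every base $\mathcal{B}\supseteq\mathcal{ST}$. $\mathsf{CLp}$ is the sequent calculus on sequents $\Gamma\Rightarrow\Delta$ (finite sets of formulas) with rules: $\mathsf{init}$: $\Gamma,A\Rightarrow A,\Delta$; $L\bot$: $\Gamma,\bot\Rightarrow\Delta$; $R\bot$: from $\Gamma\Rightarrow\Delta$ infer $\Gamma\Rightarrow\bot,\Delta$; $L\land$: from $A,B,\Gamma\Rightarrow\Delta$ infer $A\land B,\Gamma\Rightarrow\Delta$; $R\land$: from $\Gamma\Rightarrow\Delta,A$ and $\Gamma'\Rightarrow\Delta',B$ infer $\Gamma,\Gamma'\Rightarrow\Delta,\Delta',A\land B$; $L\lor$: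 from $A,\Gamma\Rightarrow\Delta$ and $B,\Gamma'\Rightarrow\Delta'$ infer $A\lor B,\Gamma,\Gamma'\Rightarrow\Delta,\Delta'$; $R\lor$: from $\Gamma\Rightarrow\Delta,A,B$ infer $\Gamma\Rightarrow\Delta,A\lor B$; $L\to$: from $\Gamma\Rightarrow\Delta,A$ and $B,\Gamma'\Rightarrow\Delta'$ infer $A\to B,\Gamma,\Gamma'\Rightarrow\Delta,\Delta'$; $R\to$: from $A,\Gamma\Rightarrow\Delta,B$ infer $\Gamma\Rightarrow\Delta,A\to B$. *)

From HB Require Import structures.
From mathcomp Require Import all_boot.
From mathcomp Require Import finmap.
Set Implicit Arguments. Unset Strict Implicit. Unset Printing Implicit Defensive.
Local Open Scope fset_scope.

Definition atom := nat.

Inductive form : Type :=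
| At of atom
| Bot
| And of form & form
| Or of form & form
| Imp of form & form.

Fixpoint form_enc (A : form) : GenTree.tree nat :=
  match A with
  | At p => GenTree.Leaf p
  | Bot => GenTree.Node 0 [::]
  | And A B => GenTree.Node 1 [:: form_enc A; form_enc B]
  | Or A B => GenTree.Node 2 [:: form_enc A; form_enc B]
  | Imp A B => GenTree.Node 3 [:: form_enc A; form_enc B]
  end.
Fixpoint form_dec (t : GenTree.tree nat) : option form :=
  match t with
  | GenTree.Leaf p => Some (At p)
  | GenTree.Node 0 [::] => Some Bot
  | GenTree.Node 1 [:: a; b] =>
      if (form_dec a, form_dec b) is (Some A, Some B) then Some (And A B) else None
  | GenTree.Node 2 [:: a; b] =>
      if (form_dec a, form_dec b) is (Some A, Some B) then Some (Or A B) else None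
  | GenTree.Node 3 [:: a; b] =>
      if (form_dec a, form_dec b) is (Some A, Some B) then Some (Imp A B) else None
  | _ => None
  end.
Lemma form_encK : pcancel form_enc form_dec.
Proof. by elim=> //= [A -> B ->|A -> B ->|A -> B ->]. Qed.
HB.instance Definition _ := Countable.copy form (pcan_type form_encK).

(* Atomic sequents: pairs of finite sets of atoms (antecedent, succedent). *)
Definition asequent := ({fset atom} * {fset atom})%type.

Record arule := ARule { prems : {fset asequent}; concl : asequent }.

Definition base := arule -> Prop.
Definition extends (B C : base) : Prop := forall r, B r -> C r.

Inductive derivable (B : base) : asequent -> Prop :=
| der_axiom (r : arule) (Th Sg : {fset atom}) :
    B r -> prems r = fset0 ->
    derivable B (Th `|` (concl r).1, (concl r).2 `|` Sg)
| der_mix (r : arule) (Th Sg : asequent -> {fset atom}) :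
    B r ->
    (forall P, P \in prems r -> derivable B (Th P `|` P.1, P.2 `|` Sg P)) ->
    derivable B ((\bigcup_(P <- prems r) Th P) `|` (concl r).1,
                 (concl r).2 `|` \bigcup_(P <- prems r) Sg P).

(* Support.  [supp_aux A k B D] means: |-_B  A, (atoms D), Rest, where the
   remaining context Rest (at any base C) is represented by the continuation
   k C D' meaning |-_C (atoms D'), Rest.  The clauses are exactly (At), (/\),
   (\/), (->) with (Inf) for a single premise, and (Bot). *)
Definition supp_atoms (C : base) (D : {fset atom}) : Prop := derivable C (fset0, D).

Fixpoint supp_aux (A : form) (k : base -> {fset atom} -> Prop)
    (B : base) (D : {fset atom}) : Prop :=
  match A with
  | At p => k B (p |` D)
  | Bot => k B D
  | And A1 A2 => supp_aux A1 k B D /\ supp_aux A2 k B D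
  | Or A1 A2 => supp_aux A1 (fun C D' => supp_aux A2 k C D') B D
  | Imp A1 A2 =>
      (* A1 ||-_B A2, (atoms D), Rest  via (Inf) with n = 1 *)
      forall C : base, extends B C ->
      forall Th : {fset atom}, supp_aux A1 supp_atoms C Th ->
      supp_aux A2 k C (Th `|` D)
  end.

Definition supp_list (l : seq form) : base -> {fset atom} -> Prop :=
  foldr supp_aux supp_atoms l.

Definition supports (B : base) (G : {fset form}) : Prop :=
  supp_list (enum_fset G) B fset0.

Definition atoms_form (Th : {fset atom}) : {fset form} := [fset At p | p in Th].

Definition inf_supports (B : base) (G D : {fset form}) : Prop :=
  if G == fset0 then supports B D
  else forall C : base, extends B C ->
       forall Th : form -> {fset atom},
       (forall A, A \in G -> supports C (atoms_form (Th A) `|` [fset A])) ->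
       supports C (atoms_form (\bigcup_(A <- enum_fset G) Th A) `|` D).

Definition Ainit (p : atom) (G D : {fset atom}) : arule :=
  ARule fset0 (p |` G, p |` D).
Definition Acut (p : atom) (G1 D1 G2 D2 : {fset atom}) : arule :=
  ARule [fset (G1, p |` D1); (p |` G2, D2)] (G1 `|` G2, D1 `|` D2).
Definition ST : base := fun r =>
  (exists p G D, r = Ainit p G D) \/
  (exists p G1 D1 G2 D2, r = Acut p G1 D1 G2 D2).

Definition valid (G D : {fset form}) : Prop :=
  forall B : base, extends ST B -> inf_supports B G D.

Inductive CLp : {fset form} -> {fset form} -> Prop :=
| CLp_init G D A : CLp (A |` G) (A |` D)
| CLp_Lbot G D : CLp (Bot |` G) D
| CLp_Rbot G D : CLp G D -> CLp G (Bot |` D)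
| CLp_Land G D A B : CLp (A |` (B |` G)) D -> CLp (And A B |` G) D
| CLp_Rand G D G' D' A B :
    CLp G (A |` D) -> CLp G' (B |` D') -> CLp (G `|` G') (And A B |` (D `|` D'))
| CLp_Lor G D G' D' A B :
    CLp (A |` G) D -> CLp (B |` G') D' -> CLp (Or A B |` (G `|` G')) (D `|` D')
| CLp_Ror G D A B : CLp G (A |` (B |` D)) -> CLp G (Or A B |` D)
| CLp_Limp G D G' D' A B :
    CLp G (A |` D) -> CLp (B |` G') D' -> CLp (Imp A B |` (G `|` G')) (D `|` D')
| CLp_Rimp G D A B : CLp (A |` G) (B |` D) -> CLp G (Imp A B |` D).

From mathcomp Require Import all_boot finmap.
Set Implicit Arguments. Unset Strict Implicit. Unset Printing Implicit Defensive.
Local Open Scope fset_scope.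

(* Soundness holds over every base, not only over those extending ST: only
   weakening and persistence of atomic derivability are used.  Each formula A
   determines, at each base C, a family of "counter" atom sets, and for a
   persistent continuation k, supporting A with side atoms D at B means that
   k C (E `|` D) holds for every extension C of B and every counter set E of A
   at C.  Support of sequents thereby reduces to derivability of atom sets,
   where every CLp rule can be checked directly. *)

(* Decides inclusions between unions of finite sets, using the inclusions in
   the context. *)
Ltac fset_solve :=
  repeat match goal with H : is_true (fsubset _ _) |- _ => move/fsubsetP: H => H end;
  let y := fresh "y" in
  apply/fsubsetP; intros y; rewrite ?in_fsetU ?in_fset0;
  repeat match goal with H : {subset _ <= _} |- _ =>
    move: (H y) => {H}; rewrite ?in_fsetU ?in_fset0 end;
  by do ![case: (y \in _)].

Lemma extends_refl B : extends B B. Proof. by []. Qed.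
Arguments extends_refl : clear implicits.

Lemma extends_trans B C D : extends B C -> extends C D -> extends B D.
Proof. by move=> hBC hCD r /hBC /hCD. Qed.

Lemma bigfcupU_absorb (I K : choiceType) (s : seq I) (F : I -> {fset K}) i0 X Y :
  i0 \in s -> \bigcup_(i <- s) F i `|` Y `<=` X ->
  \bigcup_(i <- s) (X `|` F i) `|` Y = X.
Proof.
move=> s_i0; rewrite fsubUset => /andP[sFX sYX].
apply/eqP; rewrite eqEfsubset fsubUset sYX andbT; apply/andP; split.
  apply/bigfcupsP => i s_i _; rewrite fsubUset fsubset_refl /=.
  by apply: fsubset_trans sFX; apply: bigfcup_sup.
apply: fsubset_trans (fsubsetUl _ Y).
by apply: fsubset_trans (bigfcup_sup _ s_i0 _); rewrite ?fsubsetUl.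
Qed.

Lemma derivable_extends B s C : derivable B s -> extends B C -> derivable C s.
Proof.
move=> der hBC; elim: der => {s} [r Th Sg Br nil_r | r Th Sg Br _ IH].
- exact: der_axiom (hBC _ Br) nil_r.
- exact: der_mix (hBC _ Br) IH.
Qed.

Lemma derivable_axiom_weaken B r G' D' : B r -> prems r = fset0 ->
  (concl r).1 `<=` G' -> (concl r).2 `<=` D' -> derivable B (G', D').
Proof.
move=> Br nil_r /fsetUidPr <- /fsetUidPr <-.
by rewrite fsetUC; apply: der_axiom.
Qed.

Lemma derivable_weaken B s G D : derivable B s ->
  s.1 `<=` G -> s.2 `<=` D -> derivable B (G, D).
Proof.
move=> der; elim: der G D => {s} [r Th Sg Br nil_r | r Th Sg Br _ IH] G D /= sG sD.
  by apply: derivable_axiom_weaken Br nil_r _ _; fset_solve.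
have [nil_r|[P0 r_P0]] := fset_0Vmem (prems r).
  move: sG sD; rewrite nil_r !big_seq_fset0 fset0U fsetU0.
  exact: derivable_axiom_weaken Br nil_r.
rewrite fsetUC in sD.
rewrite -(bigfcupU_absorb r_P0 sG) -(bigfcupU_absorb r_P0 sD) [X in (_, X)]fsetUC.
apply: der_mix Br _ => P r_P; apply: (IH P r_P) => /=.
  have sTh := bigfcup_sup (fun P => Th P) r_P isT; fset_solve.
have sSg := bigfcup_sup (fun P => Sg P) r_P isT; fset_solve.
Qed.

Lemma derivable_weakenR B E E' :
  derivable B (fset0, E) -> E `<=` E' -> derivable B (fset0, E').
Proof. by move=> der; apply: derivable_weaken der _. Qed.

Definition persistent (k : base -> {fset atom} -> Prop) :=
  forall B C D, extends B C -> k B D -> k C D.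

Lemma supp_atoms_persistent : persistent supp_atoms.
Proof. by move=> B C D hBC der; apply: derivable_extends der hBC. Qed.

Lemma supp_aux_persistent A k : persistent k -> persistent (supp_aux A k).
Proof.
elim: A k => [p|| A1 IH1 A2 IH2 | A1 IH1 A2 IH2 | A1 _ A2 _] k pk B C D hBC //=.
- exact: pk.
- exact: pk.
- by case=> s1 s2; split; [apply: IH1 hBC s1 | apply: IH2 hBC s2].
- exact/(IH1 _ (IH2 _ pk)).
- by move=> s C' hCC'; apply: s; apply: extends_trans hCC'.
Qed.

Fixpoint counter (A : form) (C : base) (E : {fset atom}) : Prop :=
  match A with
  | At p => E = [fset p]
  | Bot => E = fset0
  | And A1 A2 => counter A1 C E \/ counter A2 C E
  | Or A1 A2 => exists E1 E2, [/\ counter A1 C E1, counter A2 C E2 & E = E1 `|` E2]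
  | Imp A1 A2 => exists X E2,
      [/\ supp_aux A1 supp_atoms C X, counter A2 C E2 & E = E2 `|` X]
  end.

Lemma counter_persistent A : persistent (counter A).
Proof.
elim: A => [p|| A1 IH1 A2 IH2 | A1 IH1 A2 IH2 | A1 _ A2 IH2] B C E hBC //=.
- by case=> ?; [left; apply: IH1 hBC _ | right; apply: IH2 hBC _].
- case=> [E1 [E2 [c1 c2 ->]]]; exists E1, E2.
  by split=> //; [apply: IH1 hBC c1 | apply: IH2 hBC c2].
- case=> [X [E2 [sX c2 ->]]]; exists X, E2; split=> //; last exact: IH2 hBC c2.
  exact: supp_aux_persistent supp_atoms_persistent _ _ _ hBC sX.
Qed.

Lemma supp_auxE A k B D : persistent k ->
  supp_aux A k B D <->
  (forall C, extends B C -> forall E, counter A C E -> k C (E `|` D)).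
Proof.
elim: A k B D => [p|| A1 IH1 A2 IH2 | A1 IH1 A2 IH2 | A1 _ A2 IH2] k B D pk /=.
- split=> [s C hBC E -> | s]; last exact: s.
  exact: pk hBC s.
- split=> [s C hBC E -> | s]; first by rewrite fset0U; apply: pk hBC s.
  by rewrite -[D]fset0U; apply: s.
- rewrite IH1 // IH2 //; split=> [[s1 s2] C hBC E [c|c] | s].
  + exact: s1.
  + exact: s2.
  + by split=> C hBC E c; apply: s => //; [left | right].
- rewrite IH1; last exact: supp_aux_persistent.
  split=> [s C hBC E [E1 [E2 [c1 c2 ->]]] | s C hBC E1 c1].
    have := s C hBC E1 c1; rewrite IH2 // => /(_ C (extends_refl C) E2 c2).
    by rewrite fsetUA (fsetUC E2).
  rewrite IH2 // => C' hCC' E2 c2; rewrite fsetUA (fsetUC E2).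
  apply: s (extends_trans hBC hCC') _ _; exists E1, E2; split=> //.
  exact: counter_persistent hCC' c1.
- split=> [s C hBC E [X [E2 [sX c2 ->]]] | s C hBC X sX].
    by have := s C hBC X sX; rewrite IH2 // -fsetUA => /(_ C (extends_refl C) E2 c2).
  rewrite IH2 // => C' hCC' E2 c2; rewrite fsetUA.
  apply: s (extends_trans hBC hCC') _ _; exists X, E2; split=> //.
  exact: supp_aux_persistent supp_atoms_persistent _ _ _ hCC' sX.
Qed.

Definition supp_form (C : base) (A : form) (S : {fset atom}) : Prop :=
  supp_aux A supp_atoms C S.

Lemma supp_formE C A S : supp_form C A S <->
  (forall C', extends C C' -> forall E, counter A C' E -> derivable C' (fset0, E `|` S)).
Proof. exact: supp_auxE supp_atoms_persistent. Qed.

Lemma supp_form_persistent C C' A S : extends C C' -> supp_form C A S -> supp_form C' A S.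
Proof. exact: supp_aux_persistent supp_atoms_persistent C C' S. Qed.

Lemma supp_form_weaken C A S S' : S `<=` S' -> supp_form C A S -> supp_form C A S'.
Proof.
rewrite !supp_formE => sS s C' hCC' E c.
by apply: derivable_weakenR (s C' hCC' E c) _; fset_solve.
Qed.

Lemma supp_form_Or C A A' S : supp_form C (Or A A') S ->
  forall C', extends C C' -> forall E, counter A C' E -> supp_form C' A' (E `|` S).
Proof.
by rewrite /supp_form /= supp_auxE //; apply: supp_aux_persistent supp_atoms_persistent.
Qed.

Definition covers {pT : predType form} (G : pT) (C : base) (E : {fset atom}) :=
  forall A, A \in G -> exists2 E', counter A C E' & E' `<=` E.

Lemma covers_persistent {pT : predType form} (G : pT) : persistent (covers G).
Proof.
move=> C C' E hCC' cov A GA; have [E' c sE] := cov A GA.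
by exists E' => //; apply: counter_persistent hCC' c.
Qed.

Lemma supp_listE l B D : supp_list l B D <->
  (forall C, extends B C -> forall E, covers l C E -> derivable C (fset0, E `|` D)).
Proof.
elim: l B D => [|A l IH] B D /=.
  split=> [s C hBC E _ | s].
    by apply: derivable_weakenR (derivable_extends s hBC) _; fset_solve.
  by rewrite -[D]fset0U; apply: s (extends_refl B) _ _ => A.
have pl : persistent (supp_list l).
  move=> C C' D' hCC'; rewrite !IH => s C'' hC'C'' E cov.
  by apply: s (extends_trans hCC' hC'C'') _ cov.
rewrite (supp_auxE _ _ _ pl); split=> [s C hBC E cov | s C hBC E1 c1].
  have [E1 c1 sE1] := cov A (mem_head _ _).
  have := s C hBC E1 c1; rewrite IH => /(_ C (extends_refl C) E) der.
  have {}der : derivable C (fset0, E `|` (E1 `|` D)).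
    by apply: der => X lX; apply: cov; rewrite in_cons lX orbT.
  by apply: derivable_weakenR der _; fset_solve.
rewrite IH => C' hCC' E cov.
have der : derivable C' (fset0, (E `|` E1) `|` D).
  apply: s (extends_trans hBC hCC') _ _ => X; rewrite in_cons => /orP[/eqP -> | lX].
    by exists E1; [apply: counter_persistent hCC' c1 | fset_solve].
  by have [E' c sE] := cov X lX; exists E' => //; fset_solve.
by apply: derivable_weakenR der _; fset_solve.
Qed.

Lemma supportsE B G : supports B G <->
  (forall C, extends B C -> forall E, covers G C E -> derivable C (fset0, E)).
Proof.
rewrite /supports supp_listE.
by split=> s C hBC E cov; move: (s C hBC E cov); rewrite fsetU0.
Qed.

Lemma supports_atomsU C U (D : {fset form}) :
  (forall C', extends C C' -> forall E, covers D C' E -> derivable C' (fset0, E `|` U)) ->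
  supports C (atoms_form U `|` D).
Proof.
move=> s; apply/supportsE => C' hCC' E cov.
have sUE : U `<=` E.
  apply/fsubsetP => p Up.
  have [|E' /= -> /fsubsetP] := cov (At p); last by apply; rewrite in_fset1.
  by rewrite in_fsetU (in_imfset _ At Up).
have covD : covers D C' E by move=> A DA; apply: cov; rewrite in_fsetU DA orbT.
by apply: derivable_weakenR (s C' hCC' E covD) _; fset_solve.
Qed.

Lemma supports_atoms1 C U A : supports C (atoms_form U `|` [fset A]) -> supp_form C A U.
Proof.
rewrite supportsE supp_formE => s C' hCC' E c; apply: s => // X.
rewrite in_fsetU => /orP[/imfsetP[p Up ->] | /fset1P ->]; last by exists E; rewrite ?fsubsetUl.
by exists [fset p] => //; apply/fsubsetP => y /fset1P ->; rewrite in_fsetU Up orbT.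
Qed.

(* A strengthening of [inf_supports] in which all antecedent formulas share one
   side context [S]; it is preserved by every rule of CLp. *)
Definition entails (B : base) (G D : {fset form}) : Prop :=
  forall C, extends B C -> forall S, (forall X, X \in G -> supp_form C X S) ->
  forall E, covers D C E -> derivable C (fset0, E `|` S).

Lemma entails_inf_supports B G D : entails B G D -> inf_supports B G D.
Proof.
rewrite /inf_supports => s; case: eqP => [G0 | _].
  apply/supportsE => C hBC E cov; rewrite -[E]fsetU0.
  by apply: s hBC _ _ _ cov => X; rewrite G0 in_fset0.
move=> C hBC Th sTh; apply: supports_atomsU => C' hCC' E cov.
apply: s (extends_trans hBC hCC') _ _ _ cov => X GX.
apply: supp_form_persistent hCC' _; apply: supp_form_weaken (supports_atoms1 (sTh X GX)).
by apply/fsubsetP => y Thy; apply/bigfcupP; exists X; rewrite ?andbT.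
Qed.

Lemma covers_sub (G G' : {fset form}) C E : G' `<=` G -> covers G C E -> covers G' C E.
Proof. by move=> /fsubsetP sG cov A /sG; apply: cov. Qed.

Lemma covers_weaken (G : {fset form}) C E E' : E `<=` E' -> covers G C E -> covers G C E'.
Proof. by move=> sE cov A GA; have [E'' c s] := cov A GA; exists E'' => //; fset_solve. Qed.

Lemma covers_fset1U (D : {fset form}) A C E E' :
  counter A C E' -> E' `<=` E -> covers D C E -> covers (A |` D) C E.
Proof. by move=> c sE cov X /fset1UP[-> | DX]; [exists E' | apply: cov]. Qed.

Section Soundness.

Variable B : base.

Lemma entails_init G D A : entails B (A |` G) (A |` D).
Proof.
move=> C hBC S sG E cov; have [E' c sE] := cov A (fset1U1 _ _).
have /supp_formE /(_ C (extends_refl C) E' c) der := sG A (fset1U1 _ _).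
by apply: derivable_weakenR der _; fset_solve.
Qed.

Lemma entails_Lbot G D : entails B (Bot |` G) D.
Proof.
move=> C hBC S sG E cov; have /= der := sG Bot (fset1U1 _ _).
by apply: derivable_weakenR der _; fset_solve.
Qed.

Lemma entails_Rbot G D : entails B G D -> entails B G (Bot |` D).
Proof.
move=> s C hBC S sG E cov; apply: s hBC _ sG _ _.
by apply: covers_sub cov; apply: fsubsetU1.
Qed.

Lemma entails_Land G D A A' :
  entails B (A |` (A' |` G)) D -> entails B (And A A' |` G) D.
Proof.
move=> s C hBC S sG E cov; apply: s hBC _ _ _ cov => X.
have [sA sA'] : supp_form C A S /\ supp_form C A' S := sG _ (fset1U1 _ _).
rewrite !in_fset1U => /predU1P[-> // | /predU1P[-> // | GX]].
by apply: sG; rewrite in_fset1U GX orbT.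
Qed.

Lemma entails_Rand G D G' D' A A' :
  entails B G (A |` D) -> entails B G' (A' |` D') ->
  entails B (G `|` G') (And A A' |` (D `|` D')).
Proof.
move=> s s' C hBC S sG E cov; have [E' c sE] := cov _ (fset1U1 _ _).
have covD : covers D C E by apply: covers_sub cov; fset_solve.
have covD' : covers D' C E by apply: covers_sub cov; fset_solve.
case: c => c.
- apply: s hBC _ _ _ (covers_fset1U c sE covD) => X GX.
  by apply: sG; rewrite in_fsetU GX.
- apply: s' hBC _ _ _ (covers_fset1U c sE covD') => X GX.
  by apply: sG; rewrite in_fsetU GX orbT.
Qed.

Lemma entails_Lor G D G' D' A A' :
  entails B (A |` G) D -> entails B (A' |` G') D' ->
  entails B (Or A A' |` (G `|` G')) (D `|` D').
Proof.
move=> s s' C hBC S sG E cov.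
have sGS X : X \in G `|` G' -> supp_form C X (E `|` S).
  by move=> GX; apply: supp_form_weaken (sG X _); [fset_solve | rewrite in_fset1U GX orbT].
have sA : supp_form C A (E `|` S).
  apply/supp_formE => C' hCC' E1 c1.
  have der : derivable C' (fset0, E `|` (E1 `|` S)).
    apply: s' (extends_trans hBC hCC') _ _ _ _; last first.
      by apply: covers_persistent hCC' _; apply: covers_sub cov; fset_solve.
    move=> X /fset1UP[-> | G'X]; first exact: supp_form_Or (sG _ (fset1U1 _ _)) _ hCC' _ c1.
    apply: supp_form_weaken (supp_form_persistent hCC' (sG X _)); first by fset_solve.
    by rewrite in_fset1U in_fsetU G'X !orbT.
  by apply: derivable_weakenR der _; fset_solve.
have der : derivable C (fset0, E `|` (E `|` S)).
  apply: s hBC _ _ _ (covers_sub _ cov); last by fset_solve.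
  by move=> X /fset1UP[-> // | GX]; apply: sGS; rewrite in_fsetU GX.
by apply: derivable_weakenR der _; fset_solve.
Qed.

Lemma entails_Ror G D A A' : entails B G (A |` (A' |` D)) -> entails B G (Or A A' |` D).
Proof.
move=> s C hBC S sG E cov; apply: s hBC _ sG _ _.
have [_ [E1 [E2 [c1 c2 ->]]] sE] := cov _ (fset1U1 _ _).
apply: covers_fset1U c1 _ _; first by fset_solve.
apply: covers_fset1U c2 _ _; first by fset_solve.
by apply: covers_sub cov; apply: fsubsetU1.
Qed.

Lemma entails_Limp G D G' D' A A' :
  entails B G (A |` D) -> entails B (A' |` G') D' ->
  entails B (Imp A A' |` (G `|` G')) (D `|` D').
Proof.
move=> s s' C hBC S sG E cov.
have sA : supp_form C A (E `|` S).
  apply/supp_formE => C' hCC' E1 c1.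
  have der : derivable C' (fset0, (E1 `|` E) `|` S).
    apply: s (extends_trans hBC hCC') _ _ _ _.
      move=> X GX; apply: supp_form_persistent hCC' (sG X _).
      by rewrite in_fset1U in_fsetU GX orbT.
    apply: covers_fset1U c1 _ _; first by fset_solve.
    apply: covers_persistent hCC' _; apply: covers_weaken (covers_sub _ cov); fset_solve.
  by apply: derivable_weakenR der _; fset_solve.
have sA' : supp_form C A' ((E `|` S) `|` S) := sG _ (fset1U1 _ _) C (extends_refl C) _ sA.
have der : derivable C (fset0, E `|` (E `|` S)).
  apply: s' hBC _ _ _ (covers_sub _ cov); last by fset_solve.
  move=> X /fset1UP[-> | G'X]; first by apply: supp_form_weaken sA'; fset_solve.
  apply: supp_form_weaken (sG X _); first by fset_solve.
  by rewrite in_fset1U in_fsetU G'X !orbT.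
by apply: derivable_weakenR der _; fset_solve.
Qed.

Lemma entails_Rimp G D A A' : entails B (A |` G) (A' |` D) -> entails B G (Imp A A' |` D).
Proof.
move=> s C hBC S sG E cov.
have [_ [X [E2 [sX c2 ->]]] sE] := cov _ (fset1U1 _ _).
have der : derivable C (fset0, E `|` (X `|` S)).
  apply: s hBC _ _ _ _.
    move=> Y /fset1UP[-> | GY]; first by apply: supp_form_weaken sX; fset_solve.
    by apply: supp_form_weaken (sG Y GY); fset_solve.
  apply: covers_fset1U c2 _ _; first by fset_solve.
  by apply: covers_sub cov; apply: fsubsetU1.
by apply: derivable_weakenR der _; fset_solve.
Qed.

End Soundness.

Lemma CLp_entails G D B : CLp G D -> entails B G D.
Proof.
elim=> {G D}.
- exact: entails_init.
- exact: entails_Lbot.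
- by move=> *; apply: entails_Rbot.
- by move=> *; apply: entails_Land.
- by move=> *; apply: entails_Rand.
- by move=> *; apply: entails_Lor.
- by move=> *; apply: entails_Ror.
- by move=> *; apply: entails_Limp.
- by move=> *; apply: entails_Rimp.
Qed.

Theorem theorem2 (G D : {fset form}) : CLp G D -> valid G D.
Proof. by move=> der B _; apply/entails_inf_supports/CLp_entails. Qed.
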